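(* Let $(\mathcal S,\mathcal A,P,R,d_0)$ be a finite episodic MDP with horizon $T$ and let $\pi_\theta$ be a policy differentiable in $\theta\in\mathbb R^n$, as described in the context. Then for every $\gamma\in[0,1]$, $$\nabla J(\theta)=\sum_{s\in\mathcal S} d^{\pi_\theta}_\gamma(s)\,\frac{\partial}{\partial\theta}V^{\pi_\theta}_\gamma(s)+\sum_{s\in\mathcal S}V^{\pi_\theta}_\gamma(s)\,\frac{\partial}{\partial\theta}d^{\pi_\theta}_\gamma(s).$$
   Context: Setting: $\mathcal S$ is a finite set of states, $\mathcal A$ a finite set of actions, $P(s'\mid s,a)$ a transition function, $R(\cdot\mid s,a,s')$ a reward distribution supported in $[-R_{\max},R_{\max}]$, and $d_0$ an initial state distribution. There is a special terminal absorbing state: once entered, the agent remains there and receives reward $0$. An episode runs as follows: $S_0\sim d_0$; at each time $t$, $A_t\sim\pi_\theta(\cdot\mid S_t)$, $S_{t+1}\sim P(\cdot\mid S_t,A_t)$, $R_t\sim R(\cdot\mid S_t,A_t,S_{t+1})$. The horizon $T$ is fixed and $S_T$ is the terminal absorbing state. The policy probabilities $\pi_\theta(a\mid s)$ are differentiable in $\theta\in\mathbb R^n$. All probabilities and expectations are under $\pi=\pi_\theta$. The objective is $J(\theta)=\mathbb E\big[\sum_{t=0}^{T-1}R_t\big]$. For $\gamma\in[0,1]$ (with $0^0=1$), $V^{\pi_\theta}_\gamma(s)=\mathbb E\big[\sum_{i=t}^{T}\gamma^{i-t}R_i\,\big|\,S_t=s\big]$, treated as a function of $s$ alone (the conditional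 expectation is assumed not to depend on $t$, e.g. because time is encoded in the state), with value $0$ at the terminal state. Define $d^{\pi_\theta}_\gamma(s)=d_0(s)+(1-\gamma)\sum_{t=1}^{T-1}\Pr(S_t=s)$. *)

From HB Require Import structures.
From mathcomp Require Import all_boot all_order all_algebra.
From mathcomp Require Import all_classical all_reals all_analysis.
Set Implicit Arguments. Unset Strict Implicit. Unset Printing Implicit Defensive.
Import Order.TTheory GRing.Theory Num.Theory.
Import numFieldNormedType.Exports.
Local Open Scope ring_scope.

Section EpisodicMDP.
Variables (R : realType) (S A : finType) (T : nat).

(* A trajectory of an episode: states S_0,...,S_T and actions A_0,...,A_{T-1}. *)
Definition states := {ffun 'I_T.+1 -> S}.
Definition actions := {ffun 'I_T -> A}.

(* S_t and S_{t+1} for t < T *)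
Definition st (xs : states) (t : 'I_T) : S := xs (widen_ord (leqnSn T) t).
Definition nxt (xs : states) (t : 'I_T) : S := xs (lift ord0 t).

Variables (d0 : S -> R) (P : S -> A -> S -> R) (r : S -> A -> S -> R)
  (pi : S -> A -> R).

Definition traj_prob (xs : states) (us : actions) : R :=
  d0 (xs ord0) * \prod_(t < T) (pi (st xs t) (us t) * P (st xs t) (us t) (nxt xs t)).

Definition Exp (f : states -> actions -> R) : R :=
  \sum_(xs : states) \sum_(us : actions) traj_prob xs us * f xs us.

Definition rew (xs : states) (us : actions) (t : 'I_T) : R :=
  r (st xs t) (us t) (nxt xs t).

Definition Jobj : R := Exp (fun xs us => \sum_(t < T) rew xs us t).

Definition Prob_state (t : 'I_T.+1) (s : S) : R :=
  Exp (fun xs _ => if xs t == s then 1 else 0).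

(* discounted return from time t: sum_{i=t}^{T} gamma^(i-t) R_i  (R_T = 0) *)
Definition ret_from (gamma : R) (t : nat) (xs : states) (us : actions) : R :=
  \sum_(i < T | (t <= i)%N) gamma ^+ (i - t) * rew xs us i.

Definition d_gamma (gamma : R) (s : S) : R :=
  d0 s + (1 - gamma) * \sum_(t < T.+1 | (1 <= t < T)%N) Prob_state t s.

End EpisodicMDP.

Arguments traj_prob {R S A} T d0 P pi xs us.
Arguments Exp {R S A} T d0 P pi f.
Arguments rew {R S A} T r xs us t.
Arguments Jobj {R S A} T d0 P r pi.
Arguments Prob_state {R S A} T d0 P pi t s.
Arguments ret_from {R S A} T r gamma t xs us.
Arguments d_gamma {R S A} T d0 P pi gamma s.

From HB Require Import structures.
From mathcomp Require Import all_boot all_order all_algebra.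
From mathcomp Require Import all_classical all_reals all_analysis.
From mathcomp Require Import zify.
Import Order.TTheory GRing.Theory Num.Theory.
Import numFieldNormedType.Exports.
Local Open Scope ring_scope.

Set Implicit Arguments. Unset Strict Implicit. Unset Printing Implicit Defensive.

(* The gradient formula is the product rule applied to an identity that holds
   for every parameter: J = sum_s d_gamma(s) V_gamma(s).  Summing the defining
   property of V_gamma over s gives sum_s Pr(S_t = s) V_gamma(s) = E[G_t], with
   G_t the discounted return from time t, and Pr(S_0 = s) = d0(s), so the
   right-hand side is E[G_0 + (1 - gamma) sum_{t=1}^{T-1} G_t].  In this sum
   each reward R_i has total weight gamma^i + (1 - gamma) sum_{k<i} gamma^k = 1,
   hence it equals E[sum_i R_i] = J.  Differentiability of d_gamma is clear, as
   it is a polynomial in the policy probabilities. *)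

Section FfunRcons.
Variables (X : finType) (m : nat).

Definition ffun_rcons (g : {ffun 'I_m -> X}) (x : X) : {ffun 'I_m.+1 -> X} :=
  [ffun i => if unlift ord_max i is Some j then g j else x].

Lemma ffun_rcons_last g x : ffun_rcons g x ord_max = x.
Proof. by rewrite ffunE unlift_none. Qed.

Lemma ffun_rcons_widen g x j : ffun_rcons g x (widen_ord (leqnSn m) j) = g j.
Proof.
have -> : widen_ord (leqnSn m) j = lift ord_max j by apply: ord_inj; rewrite lift_max.
by rewrite ffunE liftK.
Qed.

Lemma ffun_rcons_bij : bijective (fun p : {ffun 'I_m -> X} * X => ffun_rcons p.1 p.2).
Proof.
exists (fun f : {ffun 'I_m.+1 -> X} =>
  ([ffun j => f (widen_ord (leqnSn m) j)] : {ffun 'I_m -> X}, f ord_max)).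
  move=> [g x] /=; rewrite ffun_rcons_last; congr (_, _).
  by apply/ffunP => j; rewrite ffunE ffun_rcons_widen.
move=> f; apply/ffunP => i; rewrite ffunE.
case: unliftP => [j ->|->] //; rewrite ffunE; congr (f _).
by apply: ord_inj; rewrite lift_max.
Qed.

Lemma big_ffun_rcons (R : Type) (idx : R) (op : Monoid.com_law idx)
    (F : {ffun 'I_m.+1 -> X} -> R) :
  \big[op/idx]_(f : {ffun 'I_m.+1 -> X}) F f
  = \big[op/idx]_(g : {ffun 'I_m -> X}) \big[op/idx]_(x : X) F (ffun_rcons g x).
Proof.
rewrite pair_big (reindex _ (onW_bij _ ffun_rcons_bij)) /=.
by apply: eq_bigr => -[].
Qed.

End FfunRcons.

Lemma ffun_rcons0 (X : finType) m (g : {ffun 'I_m.+1 -> X}) x :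
  ffun_rcons g x ord0 = g ord0.
Proof.
have -> : ord0 = widen_ord (leqnSn m.+1) ord0 by apply: val_inj.
exact: ffun_rcons_widen.
Qed.

Section Trajectories.
Variables (R : realType) (S A : finType) (d0 : S -> R) (P : S -> A -> S -> R)
  (pi : S -> A -> R).
Hypothesis pi_sum1 : forall s, \sum_a pi s a = 1.
Hypothesis P_sum1 : forall s a, \sum_s' P s a s' = 1.

Definition path_weight T (xs : states S T) (us : actions A T) : R :=
  \prod_(t < T) (pi (st xs t) (us t) * P (st xs t) (us t) (nxt xs t)).

Lemma path_weight_rcons T (xs : states S T) (us : actions A T) y u :
  path_weight (ffun_rcons xs y) (ffun_rcons us u)
  = path_weight xs us * (pi (xs ord_max) u * P (xs ord_max) u y).
Proof.
rewrite /path_weight big_ord_recr /=; congr (_ * _).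
  apply: eq_bigr => t _; rewrite /st /nxt !ffun_rcons_widen.
  have -> : lift ord0 (widen_ord (leqnSn T) t) = widen_ord (leqnSn T.+1) (lift ord0 t).
    exact: val_inj.
  by rewrite ffun_rcons_widen.
have -> : nxt (ffun_rcons xs y) ord_max = y.
  by rewrite /nxt -[RHS](ffun_rcons_last xs); congr (_ _); apply: val_inj.
by rewrite /st !ffun_rcons_widen ffun_rcons_last.
Qed.

Lemma sum_path_weight T (h : S -> R) :
  \sum_(xs : states S T) \sum_(us : actions A T) h (xs ord0) * path_weight xs us
  = \sum_s h s.
Proof.
elim: T h => [|T IH] h.
  have pw_nil xs us : path_weight (T := 0) xs us = 1 by rewrite /path_weight big_ord0.
  under eq_bigr do under eq_bigr do rewrite pw_nil mulr1.
  under eq_bigr do rewrite sumr_const card_ffun card_ord expn0 mulr1n.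
  have rcons0 (g : {ffun 'I_0 -> S}) x : ffun_rcons g x ord0 = x.
    by rewrite (_ : ord0 = ord_max) ?ffun_rcons_last //; apply: val_inj.
  rewrite big_ffun_rcons; under eq_bigr do under eq_bigr do rewrite rcons0.
  by rewrite sumr_const card_ffun card_ord expn0 mulr1n.
rewrite -IH big_ffun_rcons; apply: eq_bigr => xs _.
rewrite exchange_big big_ffun_rcons; apply: eq_bigr => us _ /=.
have sum_next u : \sum_y pi (xs ord_max) u * P (xs ord_max) u y = pi (xs ord_max) u.
  by rewrite -big_distrr /= P_sum1 mulr1.
under eq_bigr => u _.
  under eq_bigr => y _ do rewrite ffun_rcons0 path_weight_rcons mulrA.
  rewrite -big_distrr sum_next.
  over.
by rewrite -big_distrr /= pi_sum1 mulr1.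
Qed.

Lemma Exp_init T (f : S -> R) :
  Exp T d0 P pi (fun xs _ => f (xs ord0)) = \sum_s d0 s * f s.
Proof.
rewrite -(sum_path_weight T (fun s => d0 s * f s)) /Exp /traj_prob.
by apply: eq_bigr => xs _; apply: eq_bigr => us _; rewrite mulrAC.
Qed.

Lemma Prob_state0 T s : Prob_state T d0 P pi ord0 s = d0 s.
Proof.
rewrite /Prob_state (Exp_init T (fun x => if x == s then 1 else 0)).
rewrite (bigD1 s) //= eqxx mulr1 big1 ?addr0 // => x.
by move=> /negbTE ->; rewrite mulr0.
Qed.

End Trajectories.

Section Expectation.
Variables (R : realType) (S A : finType) (T : nat) (d0 : S -> R)
  (P : S -> A -> S -> R) (pi : S -> A -> R).
Local Notation Exp := (Exp T d0 P pi).

Lemma eq_Exp f g : (forall xs us, f xs us = g xs us) -> Exp f = Exp g.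
Proof. by move=> fg; apply: eq_bigr => xs _; apply: eq_bigr => us _; rewrite fg. Qed.

Lemma ExpD f g : Exp (fun xs us => f xs us + g xs us) = Exp f + Exp g.
Proof.
rewrite /Exp -big_split; apply: eq_bigr => xs _.
by rewrite -big_split; apply: eq_bigr => us _; rewrite mulrDr.
Qed.

Lemma ExpZl c f : Exp (fun xs us => c * f xs us) = c * Exp f.
Proof.
rewrite /Exp big_distrr; apply: eq_bigr => xs _.
by rewrite big_distrr; apply: eq_bigr => us _; rewrite mulrCA.
Qed.

Lemma Exp_sum (I : finType) (Q : pred I) (F : I -> states S T -> actions A T -> R) :
  Exp (fun xs us => \sum_(i | Q i) F i xs us) = \sum_(i | Q i) Exp (F i).
Proof.
rewrite /Exp; under eq_bigr do under eq_bigr do rewrite mulr_sumr.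
by under eq_bigr do rewrite exchange_big; rewrite exchange_big.
Qed.

Lemma sum_Exp_state_indicator (t : 'I_T.+1) f :
  \sum_s Exp (fun xs us => (if xs t == s then 1 else 0) * f xs us) = Exp f.
Proof.
rewrite -Exp_sum; apply: eq_Exp => xs us.
rewrite -mulr_suml (bigD1 (xs t)) //= eqxx big1 ?addr0 ?mul1r // => s.
by rewrite eq_sym => /negbTE ->.
Qed.

End Expectation.

Lemma geometric_weights (R : pzRingType) (gamma : R) i :
  gamma ^+ i + (1 - gamma) * \sum_(k < i) gamma ^+ k = 1.
Proof. by rewrite -opprB mulNr -subrX1 opprB addrC subrK. Qed.

Section ValueDecomposition.
Variables (R : realType) (S A : finType) (T : nat) (d0 : S -> R)
  (P : S -> A -> S -> R) (r : S -> A -> S -> R) (pi : S -> A -> R) (gamma : R).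

Lemma discount_weights_sum1 (i : 'I_T) :
  gamma ^+ i + (1 - gamma) *
    \sum_(t < T.+1 | (1 <= t < T)%N && (t <= i)%N) gamma ^+ (i - t) = 1.
Proof.
rewrite -[RHS](geometric_weights gamma i); congr (_ + _ * _).
rewrite -(big_mkord (fun t => (1 <= t < T)%N && (t <= i)%N) (fun t => gamma ^+ (i - t))).
rewrite (eq_bigl (fun t => (1 <= t)%N && (t < i.+1)%N)); last first.
  by move=> t /=; have := ltn_ord i; lia.
rewrite -big_nat_widen ?ltnS 1?ltnW // big_mkcond big_nat_recl //= add0r.
rewrite -(big_mkord xpredT) big_nat_rev.
by apply: eq_big_nat => k ltki; congr (_ ^+ _); lia.
Qed.

Lemma sum_rew_ret_from xs us :
  \sum_(i < T) rew T r xs us i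
  = ret_from T r gamma 0 xs us
    + (1 - gamma) * \sum_(t < T.+1 | (1 <= t < T)%N) ret_from T r gamma t xs us.
Proof.
rewrite /ret_from (eq_bigl xpredT) //.
under [X in _ = _ + _ * X]eq_bigr do rewrite big_mkcond.
rewrite exchange_big /=.
under [X in _ = _ + _ * X]eq_bigr do rewrite -big_mkcondr -mulr_suml.
rewrite big_distrr -big_split /=; apply: eq_bigr => i _.
by rewrite subn0 mulrA -mulrDl discount_weights_sum1 mul1r.
Qed.

Hypothesis pi_sum1 : forall s, \sum_a pi s a = 1.
Hypothesis P_sum1 : forall s a, \sum_s' P s a s' = 1.
Variable V : S -> R.
Hypothesis Prob_state_value : forall t s,
  Prob_state T d0 P pi t s * V s
  = Exp T d0 P pi (fun xs us => (if xs t == s then 1 else 0) * ret_from T r gamma t xs us).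

Lemma sum_Prob_state_value t :
  \sum_s Prob_state T d0 P pi t s * V s = Exp T d0 P pi (ret_from T r gamma t).
Proof. by under eq_bigr do rewrite Prob_state_value; exact: sum_Exp_state_indicator. Qed.

Lemma Jobj_sum_d_gamma_value : Jobj T d0 P r pi = \sum_s d_gamma T d0 P pi gamma s * V s.
Proof.
under eq_bigr do rewrite /d_gamma mulrDl -mulrA mulr_suml.
rewrite big_split /= -big_distrr /= exchange_big /=.
have -> : \sum_s d0 s * V s = \sum_s Prob_state T d0 P pi ord0 s * V s.
  by apply: eq_bigr => s _; rewrite Prob_state0.
rewrite sum_Prob_state_value; under eq_bigr do rewrite sum_Prob_state_value.
by rewrite -Exp_sum -ExpZl -ExpD; apply: eq_Exp; exact: sum_rew_ret_from.
Qed.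

End ValueDecomposition.

Section BigDifferentiable.
Variables (R : realType) (U : normedModType R) (x : U) (I : Type) (s : seq I)
  (Q : pred I).

Lemma differentiable_big_sum (F : I -> U -> R) :
  (forall i, Q i -> differentiable (F i) x) ->
  differentiable (fun y => \sum_(i <- s | Q i) F i y) x.
Proof.
move=> dF; rewrite -fct_sumE.
by apply: (big_ind (fun f => differentiable f x)) => // f g; apply: differentiableD.
Qed.

Lemma differentiable_big_prod (F : I -> U -> R) :
  (forall i, Q i -> differentiable (F i) x) ->
  differentiable (fun y => \prod_(i <- s | Q i) F i y) x.
Proof.
move=> dF; rewrite -fct_prodE.
by apply: (big_ind (fun f => differentiable f x)) => // f g; apply: differentiableM.
Qed.

Lemma diff_big_sum (F : I -> U -> R) v :
  (forall i, Q i -> differentiable (F i) x) ->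
  'd (fun y => \sum_(i <- s | Q i) F i y) x v = \sum_(i <- s | Q i) 'd (F i) x v.
Proof.
move=> dF; rewrite -fct_sumE.
suff [] : differentiable (\sum_(i <- s | Q i) F i) x
          /\ 'd (\sum_(i <- s | Q i) F i) x v = \sum_(i <- s | Q i) 'd (F i) x v by [].
apply: (big_ind2 (fun f w => differentiable f x /\ 'd f x v = w)).
- by rewrite (_ : 0 = cst (0 : R) :> (U -> R)) // diff_cst.
- by move=> f w g w' [df <-] [dg <-]; split; [exact: differentiableD | rewrite diffD].
- by move=> i Qi; split; [exact: dF|].
Qed.

Lemma diff_sum_mul (F G : I -> U -> R) v :
  (forall i, differentiable (F i) x) -> (forall i, differentiable (G i) x) ->
  'd (fun y => \sum_(i <- s | Q i) F i y * G i y) x v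
  = \sum_(i <- s | Q i) F i x * 'd (G i) x v + \sum_(i <- s | Q i) G i x * 'd (F i) x v.
Proof.
move=> dF dG; rewrite diff_big_sum => [|i _]; last exact: differentiableM.
by rewrite -big_split; apply: eq_bigr => i _; rewrite diffM.
Qed.

End BigDifferentiable.

Section DifferentiablePolicy.
Variables (R : realType) (S A : finType) (T : nat) (d0 : S -> R)
  (P : S -> A -> S -> R) (Theta : normedModType R) (pi : Theta -> S -> A -> R)
  (x : Theta).
Hypothesis pi_differentiable : forall s a, differentiable (fun th => pi th s a) x.

Lemma differentiable_Exp f : differentiable (fun th => Exp T d0 P (pi th) f) x.
Proof.
rewrite /Exp /traj_prob.
apply: differentiable_big_sum => xs _; apply: differentiable_big_sum => us _.
apply: differentiableM => //; apply: differentiableM => //.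
by apply: differentiable_big_prod => t _; apply: differentiableM.
Qed.

Lemma differentiable_d_gamma gamma s :
  differentiable (fun th => d_gamma T d0 P (pi th) gamma s) x.
Proof.
rewrite /d_gamma /Prob_state; apply: differentiableD => //; apply: differentiableM => //.
by apply: differentiable_big_sum => t _; apply: differentiable_Exp.
Qed.

End DifferentiablePolicy.

Theorem corollary1 (R : realType) (S A : finType) (T n : nat)
  (d0 : S -> R) (P : S -> A -> S -> R) (r : S -> A -> S -> R) (Rmax : R)
  (term : S) (pi : 'rV[R]_n -> S -> A -> R)
  (gamma : R) (V : 'rV[R]_n -> S -> R) (theta : 'rV[R]_n) :
  (* d0 is a probability distribution *)
  (forall s, 0 <= d0 s) -> \sum_s d0 s = 1 ->
  (* P is a transition kernel *)
  (forall s a s', 0 <= P s a s') -> (forall s a, \sum_s' P s a s' = 1) ->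
  (* bounded (expected) rewards *)
  (forall s a s', `|r s a s'| <= Rmax) ->
  (* terminal absorbing state with zero reward *)
  (forall a, P term a term = 1) -> (forall a s', r term a s' = 0) ->
  (* the policy: a distribution over actions, differentiable in the parameter *)
  (forall th s a, 0 <= pi th s a) -> (forall th s, \sum_a pi th s a = 1) ->
  (forall th s a, differentiable (fun th' => pi th' s a) th) ->
  (* S_T is the terminal state *)
  (forall th, Prob_state T d0 P (pi th) ord_max term = 1) ->
  (0 <= gamma <= 1) ->
  (* V_gamma(s) = E[ sum_{i=t}^T gamma^(i-t) R_i | S_t = s ], independent of t *)
  (forall th (t : 'I_T.+1) s,
     Prob_state T d0 P (pi th) t s * V th s
     = Exp T d0 P (pi th)
         (fun xs us => (if xs t == s then 1 else 0) * ret_from T r gamma t xs us)) ->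
  (forall th, V th term = 0) ->
  (forall th s, differentiable (fun th' => V th' s) th) ->
  differentiable (fun th => Jobj T d0 P r (pi th)) theta /\
  forall v : 'rV[R]_n,
    'd (fun th => Jobj T d0 P r (pi th)) theta v
    = \sum_s d_gamma T d0 P (pi theta) gamma s * 'd (fun th => V th s) theta v
      + \sum_s V theta s * 'd (fun th => d_gamma T d0 P (pi th) gamma s) theta v.
Proof.
move=> _ _ _ P_sum1 _ _ _ _ pi_sum1 pi_diff _ _ V_def _ V_diff.
have -> : (fun th => Jobj T d0 P r (pi th))
          = (fun th => \sum_s d_gamma T d0 P (pi th) gamma s * V th s).
  apply/funext => th; apply: (Jobj_sum_d_gamma_value (pi_sum1 th) P_sum1).
  exact: V_def.
have d_diff s : differentiable (fun th => d_gamma T d0 P (pi th) gamma s) theta.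
  exact: differentiable_d_gamma.
split; first by apply: differentiable_big_sum => s _; apply: differentiableM.
by move=> v; rewrite diff_sum_mul.
Qed.
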